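(* Let $f:\Gamma\to\Gamma$ be an irreducible, expanding graph map with stacks $\mathcal{K}_1,\dots,\mathcal{K}_p$, where $\mathcal{K}_i$ has $n_i$ edges, and let $n=|\mathcal{E}\Gamma|$. Then the stack graph $\mathcal{SG}(f)$ is strongly connected, and for every $i$ the set of all vertices of $\mathcal{SG}(f)$ is contained in the directed ball $B_{n-n_i}(\mathcal{K}_i)$.
   Context: A graph $\Gamma$ is a finite 1-dimensional CW complex with a chosen orientation on each edge; $\mathcal{E}\Gamma$ is its set of edges, $\bar e$ is the reverse of $e$, $\iota,\tau$ the endpoints. An edge path is a nonempty concatenation $u=e_1\cdots e_k$ of oriented edges with $\tau(e_i)=\iota(e_{i+1})$; $|u|=k$ (no cancellation); $u$ traverses $e$ if $e$ or $\bar e$ occurs in it. A graph map $f:\Gamma\to\Gamma$ assigns to vertices vertices and to each oriented edge $e$ an edge path $f(e)$ with $\iota(f(e))=f(\iota(e))$, $f(\bar e)=\overline{f(e)}$; powers are compositions, applied to paths by concatenation without tightening. $T(f)$ has $(i,j)$ entry the number of times $f(e_i)$ traverses $e_j$; $f$ is irreducible if $T(f)$ is irreducible and every vertex has valence $\ge3$; expanding if $|f^n(e)|\to\infty$ for every edge. Stacks: $e$ is mixing if $|f(e)|>1$; surplus if non-mixing and $f(e)\in\{f(u),\overline{f(u)}\}$ for some edge $u\notin\{e,\bar e\}$. Stacks are the classes of the equivalence relation on $\mathcal{E}\Gamma$ (unoriented edges) generated by $e\sim f(e)$ for $e$ non-mixing and non-surplus. Each stack has the form $\mathcal{K}=\{e,f(e),\dots,f^s(e)\}$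 with only $f^s(e)$ mixing or surplus; $f^s(e)$ is the final edge of $\mathcal{K}$. Let $\alpha_i$ be the final edge of $\mathcal{K}_i$. The stack graph $\mathcal{SG}(f)$ is the directed graph with vertex set $\{\mathcal{K}_1,\dots,\mathcal{K}_p\}$ and a directed edge $[\mathcal{K}_i,\mathcal{K}_j]$ whenever $f(\alpha_i)$ contains an edge of $\mathcal{K}_j$; its length is $s([\mathcal{K}_i,\mathcal{K}_j])=\min\{s\ge1:f^s(\alpha_i)\text{ traverses }\alpha_j\}$. For a directed path $P=E_1\cdots E_k$ (edges traversed only in their positive direction), $s(P)=\sum s(E_i)$. The directed ball of size $d$ at $\mathcal{K}_i$ is $B_d(\mathcal{K}_i)=\{\mathcal{K}_j:\text{there is a directed path }P\text{ from }\mathcal{K}_i\text{ to }\mathcal{K}_j\text{ with }s(P)\le d\}$ (the empty path, of length $0$, is allowed, so $\mathcal{K}_i\in B_d(\mathcal{K}_i)$). Strongly connected means there is a directed path between any ordered pair of vertices. *)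

From HB Require Import structures.
From mathcomp Require Import all_boot all_order all_algebra.
Set Implicit Arguments. Unset Strict Implicit. Unset Printing Implicit Defensive.
Import GRing.Theory Num.Theory.

(* A graph: finite vertex type V, finite type E of (positively oriented,
   i.e. unoriented) edges with endpoints src (iota) and tgt (tau).
   An oriented edge is a pair (e, b) : E * bool; b = true is the chosen
   orientation e, b = false is the reverse edge \bar e.
   A graph map is given by fV : V -> V and, for each positively oriented
   edge e, the edge path fE e = f(e); f(\bar e) := reverse of f(e). *)
Section GraphMaps.
Variables (V E : finType) (src tgt : E -> V).

Definition oedge := (E * bool)%type.
Definition orev (o : oedge) : oedge := (o.1, ~~ o.2).
Definition oiota (o : oedge) : V := if o.2 then src o.1 else tgt o.1.
Definition otau (o : oedge) : V := if o.2 then tgt o.1 else src o.1.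

Fixpoint consec (o : oedge) (p : seq oedge) : bool :=
  if p is o' :: p' then (otau o == oiota o') && consec o' p' else true.
Definition is_edge_path (p : seq oedge) : bool :=
  if p is o :: p' then consec o p' else false.
Definition path_iota (p : seq oedge) (d : V) : V :=
  if p is o :: _ then oiota o else d.
Definition rev_path (p : seq oedge) : seq oedge := rev (map orev p).

Definition valence (v : V) : nat := #|[pred o : oedge | oiota o == v]|.

Definition traverses (p : seq oedge) (e : E) : bool := has (fun o => o.1 == e) p.

Variables (fV : V -> V) (fE : E -> seq oedge).

Definition fo (o : oedge) : seq oedge :=
  if o.2 then fE o.1 else rev_path (fE o.1).
(* image of a path, concatenation without tightening *)
Definition fpath (p : seq oedge) : seq oedge := flatten (map fo p).
Definition fpow (k : nat) (e : E) : seq oedge := iter k fpath [:: (e, true)].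

Definition is_graph_map : Prop :=
  forall e : E, is_edge_path (fE e) /\
    path_iota (fE e) (fV (src e)) = fV (src e) /\
    path_iota (rev_path (fE e)) (fV (tgt e)) = fV (tgt e).

Definition transition : 'M[int]_#|E| :=
  \matrix_(i, j) (count (fun o : oedge => o.1 == enum_val j) (fE (enum_val i)))%:Z%R.

Definition irreducible_matrix n (M : 'M[int]_n) : Prop :=
  forall i j : 'I_n, exists k, (0 < k)%N /\ (0 < (M ^+ k) i j)%R.

Definition irreducible_map : Prop :=
  irreducible_matrix transition /\ forall v : V, (3 <= valence v)%N.

Definition expanding : Prop :=
  forall e : E, forall M : nat, exists N, forall k, (N <= k)%N -> (M <= size (fpow k e))%N.

Definition mixing (e : E) : bool := (1 < size (fE e))%N.
Definition surplus (e : E) : bool :=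
  ~~ mixing e && [exists u : E, (u != e) &&
     ((fE e == fE u) || (fE e == rev_path (fE u)))].

Definition stack_step (e e' : E) : bool :=
  ~~ mixing e && ~~ surplus e && (map fst (fE e) == [:: e']).
Definition stack_rel : rel E :=
  connect (fun x y => stack_step x y || stack_step y x).
Definition stack_of (e : E) : {set E} := [set e' | stack_rel e e'].
Definition stacks : {set {set E}} := [set stack_of e | e : E].

(* final edge of a stack: its (unique) mixing or surplus edge *)
Definition final (K : {set E}) : option E := [pick a in K | mixing a || surplus a].

Definition sg_edge (K K' : {set E}) : Prop :=
  K \in stacks /\ K' \in stacks /\
  exists a, final K = Some a /\ exists2 e', e' \in K' & traverses (fE a) e'.

Definition sg_len (K K' : {set E}) (s : nat) : Prop :=
  exists a b, final K = Some a /\ final K' = Some b /\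
    (0 < s)%N /\ traverses (fpow s a) b /\
    forall s', (0 < s')%N -> (s' < s)%N -> ~~ traverses (fpow s' a) b.

Inductive sg_dpath : {set E} -> {set E} -> nat -> Prop :=
| sg_nil K : sg_dpath K K 0
| sg_cons K K' K'' s w :
    sg_edge K K' -> sg_len K K' s -> sg_dpath K' K'' w -> sg_dpath K K'' (s + w).

Definition strongly_connected_SG : Prop :=
  forall K K', K \in stacks -> K' \in stacks -> exists w, sg_dpath K K' w.

Definition ball (d : nat) (K : {set E}) : {set E} -> Prop :=
  fun K' => K' \in stacks /\ exists2 w, (w <= d)%N & sg_dpath K K' w.

End GraphMaps.

From Pilot Require Import Defs.
From mathcomp Require Import all_boot all_order all_algebra zify.
Import GRing.Theory Num.Theory.

Set Implicit Arguments. Unset Strict Implicit. Unset Printing Implicit Defensive.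

(* Every stack ends in a unique final edge alpha: a stack without one would be
   a chain of single edges that f never expands.  Let R_d be the set of edges
   traversed by f^s(K) for some s <= d.  By irreducibility R_d grows strictly
   until it is all of E, so R_(n - |K|) = E.  Since f maps each non-final edge
   of K onto the next edge of K, every edge outside K is then traversed by
   f^s(alpha) for some s <= n - |K|.  Finally, if f^s(alpha) traverses x, the
   chain of stacks through which this occurrence arises is a directed path in
   SG(f) to the stack of x, of weight at most s plus the number of steps from
   x to the final edge of its stack. *)

Section StackGraph.
Variables (E : finType) (fE : E -> seq (E * bool)).

Definition ftrav (A : {set E}) : {set E} :=
  [set y | [exists z in A, traverses (fE z) y]].

Lemma ftravP (A : {set E}) y :
  reflect (exists2 z, z \in A & traverses (fE z) y) (y \in ftrav A).
Proof. by rewrite inE; apply: exists_inP. Qed.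

Lemma ftrav1 x y : (y \in ftrav [set x]) = traverses (fE x) y.
Proof.
by apply/ftravP/idP => [[z /set1P -> //]|]; exists x; rewrite ?set11.
Qed.

Lemma ftravS : {homo ftrav : A B / A \subset B}.
Proof.
move=> A B /subsetP sAB; apply/subsetP => y /ftravP[z /sAB zB zy].
by apply/ftravP; exists z.
Qed.

Lemma iter_ftravS k : {homo iter k ftrav : A B / A \subset B}.
Proof. by elim: k => // k IHk A B /IHk; apply: ftravS. Qed.

Lemma iter_ftrav_step r z x :
  traverses (fE z) x -> iter r ftrav [set x] \subset iter r.+1 ftrav [set z].
Proof.
by move=> zx; rewrite iterSr; apply: iter_ftravS; rewrite sub1set ftrav1.
Qed.

Lemma traverses_rev_path (p : seq (E * bool)) y :
  traverses (Defs.rev_path p) y = traverses p y.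
Proof. by rewrite /traverses /Defs.rev_path has_rev has_map. Qed.

Lemma traverses_fpath p y :
  traverses (Defs.fpath fE p) y = (y \in ftrav [set z | traverses p z]).
Proof.
have -> : traverses (Defs.fpath fE p) y = has (fun o => traverses (fE o.1) y) p.
  elim: p => //= o p IHp; rewrite /traverses /Defs.fpath /= has_cat -IHp.
  by rewrite /fo; case: o.2; rewrite // -/(traverses _ _) traverses_rev_path.
apply/hasP/ftravP => [[o po oy]|[z]].
  by exists o.1; rewrite // inE; apply/hasP; exists o.
by rewrite inE => /hasP[o po /eqP <-]; exists o.
Qed.

Lemma traverses_fpow k x y :
  traverses (fpow fE k x) y = (y \in iter k ftrav [set x]).
Proof.
elim: k y => [|k IHk] y; first by rewrite /traverses /= orbF inE eq_sym.
rewrite /fpow iterS traverses_fpath; congr (_ \in ftrav _).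
by apply/setP => z; rewrite inE IHk.
Qed.

Lemma transition_neq0 i j :
  (transition fE i j != 0)%R = traverses (fE (enum_val i)) (enum_val j).
Proof. by rewrite mxE eqz_nat /traverses has_count lt0n. Qed.

Lemma transition_pow_neq0 k i j :
  ((transition fE ^+ k) i j != 0)%R ->
  enum_val j \in iter k ftrav [set enum_val i].
Proof.
elim: k j => [|k IHk] j.
  have [<-|ij] := eqVneq i j; first by rewrite set11.
  by rewrite expr0 mxE (negbTE ij) mulr0n eqxx.
rewrite exprSr -mulmxE mxE => sum_neq0.
have [l _] :
    exists2 l, true & ((transition fE ^+ k) i l * transition fE l j != 0)%R.
  apply/exists_inP; apply: contraR sum_neq0 => /exists_inPn all0.
  by rewrite big1 // => l _; apply/eqP/negbNE/all0.
rewrite mulf_eq0 negb_or => /andP[/IHk il]; rewrite transition_neq0 => lj.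
by apply/ftravP; exists (enum_val l).
Qed.

Lemma irreducible_ftrav : irreducible_matrix (transition fE) ->
  forall x y, exists k, y \in iter k ftrav [set x].
Proof.
move=> irr x y.
have [k [_ /lt0r_neq0/transition_pow_neq0]] := irr (enum_rank x) (enum_rank y).
by rewrite !enum_rankK; exists k.
Qed.

Fixpoint ftrav_upto (A : {set E}) d : {set E} :=
  if d is d'.+1 then A :|: ftrav (ftrav_upto A d') else A.

Lemma ftrav_upto_sub A d : ftrav_upto A d \subset ftrav_upto A d.+1.
Proof.
elim: d => [|d IHd]; first exact: subsetUl.
by apply: setUS; apply: ftravS.
Qed.

Lemma iter_ftrav_sub (A U : {set E}) k :
  A \subset U -> ftrav U \subset U -> iter k ftrav A \subset U.
Proof.
move=> sAU sfU; elim: k => //= k IHk.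
exact: subset_trans (ftravS IHk) sfU.
Qed.

Lemma card_ftrav_upto A d : (forall y, exists k, y \in iter k ftrav A) ->
  minn #|E| (#|A| + d) <= #|ftrav_upto A d|.
Proof.
move=> reach; elim: d => [|d IHd]; first by rewrite addn0 geq_minr.
have [stable|grows] := eqVneq (ftrav_upto A d.+1) (ftrav_upto A d).
  suff -> : ftrav_upto A d.+1 = setT by rewrite cardsT geq_minl.
  apply/setP => y; rewrite in_setT; have [k] := reach y.
  suff /subsetP : iter k ftrav A \subset ftrav_upto A d.+1 by apply.
  apply: iter_ftrav_sub; first exact: subsetUl.
  by rewrite {1}stable subsetUr.
have /proper_card : ftrav_upto A d \proper ftrav_upto A d.+1.
  by rewrite properEneq eq_sym grows ftrav_upto_sub.
lia.
Qed.

Lemma ftrav_upto_full A : (forall y, exists k, y \in iter k ftrav A) ->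
  ftrav_upto A (#|E| - #|A|) = setT.
Proof.
move=> /(card_ftrav_upto (#|E| - #|A|)).
rewrite subnKC ?max_card // minnn => le_card.
by apply/eqP; rewrite eqEcard subsetT cardsT.
Qed.

Definition final_edge (e : E) : bool := mixing fE e || surplus fE e.

Lemma final_edgeN_step x y : stack_step fE x y -> ~~ final_edge x.
Proof. by rewrite /stack_step /final_edge negb_or => /andP[-> _]. Qed.

Lemma stack_step_fun x y z : stack_step fE x y -> stack_step fE x z -> y = z.
Proof. by rewrite /stack_step => /andP[_ /eqP ->] /andP[_ /eqP []]. Qed.

Lemma stack_rel_step x y : stack_step fE x y -> stack_rel fE x y.
Proof. by move=> xy; apply: connect1; rewrite xy. Qed.

Lemma stack_rel_sym : symmetric (stack_rel fE).
Proof. by apply: sym_connect_sym => x y; rewrite orbC. Qed.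

Lemma mem_stack_of x : x \in stack_of fE x.
Proof. by rewrite inE; apply: connect0. Qed.

Lemma stack_of_eq x y : stack_rel fE x y -> stack_of fE x = stack_of fE y.
Proof.
move=> xy; apply/setP => z; rewrite !inE.
apply/idP/idP; last exact: connect_trans.
have yx : stack_rel fE y x by rewrite stack_rel_sym.
exact: connect_trans.
Qed.

Lemma stacks_stack_of x : stack_of fE x \in stacks fE.
Proof. exact: imset_f. Qed.

(* Steps form a partial function that is undefined exactly on final edges, so
   a zigzag ending at a final edge can be straightened into forward steps. *)
Lemma stack_rel_final x a :
  final_edge a -> stack_rel fE x a -> connect (stack_step fE) x a.
Proof.
move=> fa /connectP[p]; elim: p x => [|y p IHp] x /=; first by move=> _ ->.
case/andP => /orP[xy | yx] yp a_last.
  exact: connect_trans (connect1 xy) (IHp y yp a_last).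
case/connectP: (IHp y yp a_last) => [[|z q]] /=.
  by move=> _ ay; move: fa; rewrite ay (negbTE (final_edgeN_step yx)).
case/andP => yz zq a_last'; apply/connectP.
by exists q; rewrite ?(stack_step_fun yx yz).
Qed.

Lemma final_edge_uniq a b :
  stack_rel fE a b -> final_edge a -> final_edge b -> a = b.
Proof.
move=> ab fa /stack_rel_final/(_ ab)/connectP[[|z q] /=]; first by move=> _ ->.
by case/andP => /final_edgeN_step; rewrite fa.
Qed.

Lemma final_stack_of a : final_edge a -> final fE (stack_of fE a) = Some a.
Proof.
move=> fa; rewrite /final; case: pickP => [b /andP[ab fb]|none].
  by rewrite inE in ab; rewrite (final_edge_uniq ab fa fb).
by move: (none a); rewrite mem_stack_of /= -/(final_edge a) fa.
Qed.

Hypothesis fE_neq_nil : forall e, fE e != [::].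

Lemma non_final_step z :
  ~~ final_edge z -> exists y c, fE z = [:: (y, c)] /\ stack_step fE z y.
Proof.
move=> nfz; have /norP[nm _] := nfz; move: nm (fE_neq_nil z).
rewrite /stack_step -negb_or -/(final_edge z) nfz /mixing.
by case: (fE z) => [|[y c] [|o q]] //= _ _; exists y, c; rewrite eqxx.
Qed.

Lemma ftrav_stack_of a : final_edge a ->
  ftrav (stack_of fE a) \subset stack_of fE a :|: ftrav [set a].
Proof.
move=> fa; apply/subsetP => y /ftravP[z az zy].
rewrite in_setU ftrav1; rewrite inE in az.
have [<-|nza] := eqVneq z a; first by rewrite zy orbT.
have nfz : ~~ final_edge z.
  apply: contra nza => fz; apply/eqP/final_edge_uniq => //.
  by rewrite stack_rel_sym.
have [y' [c [fzE zy']]] := non_final_step nfz.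
move: zy; rewrite fzE /traverses /= orbF => /eqP <-.
have ay' : stack_rel fE a y' := connect_trans az (stack_rel_step zy').
by rewrite inE ay'.
Qed.

Hypothesis fE_expanding : expanding fE.

Lemma stacksP K :
  K \in stacks fE -> exists2 a, final_edge a & K = stack_of fE a.
Proof.
case/imsetP => e _ ->.
have [a /andP[ea fa]|none] := pickP [pred a in stack_of fE e | final_edge a].
  by exists a => //; apply: stack_of_eq; rewrite inE in ea.
have single k : exists x b, fpow fE k e = [:: (x, b)] /\ x \in stack_of fE e.
  elim: k => [|k [x [b [ek xe]]]].
    by exists e, true; rewrite mem_stack_of.
  have nfx : ~~ final_edge x.
    by apply/negP => fx; move: (none x); rewrite /= xe fx.
  have [y [c [fxE xy]]] := non_final_step nfx.
  exists y, (if b then c else ~~ c); split.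
    rewrite /fpow iterS -/(fpow fE k e) ek /Defs.fpath /= cats0 /fo.
    by case: b {ek}; rewrite fxE.
  rewrite inE in xe.
  have ey : stack_rel fE e y := connect_trans xe (stack_rel_step xy).
  by rewrite inE ey.
have [N leN] := fE_expanding e 2.
by have [x [b [eN _]]] := single N; move: (leN N (leqnn N)); rewrite eN.
Qed.

Lemma sg_dpath_rcons K K' K'' w s : sg_dpath fE K K' w ->
  sg_edge fE K' K'' -> sg_len fE K' K'' s -> sg_dpath fE K K'' (w + s).
Proof.
elim=> [K0 e l|K0 K1 K2 s0 w0 e0 l0 _ IHp e l].
  by rewrite -[s]addn0; apply: sg_cons e l (sg_nil _ _).
by rewrite -addnA; apply: sg_cons e0 l0 (IHp e l).
Qed.

Lemma sg_edge_from_final z x b r : final_edge z -> traverses (fE z) x ->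
    final fE (stack_of fE x) = Some b -> b \in iter r ftrav [set x] ->
  exists2 L, L <= r.+1 & sg_edge fE (stack_of fE z) (stack_of fE x) /\
                         sg_len fE (stack_of fE z) (stack_of fE x) L.
Proof.
move=> fz zx xfinal xb.
have zb : b \in iter r.+1 ftrav [set z].
  exact: subsetP (iter_ftrav_step r zx) _ xb.
have exL : exists L, (0 < L) && (b \in iter L ftrav [set z]).
  by exists r.+1; rewrite zb.
case: (ex_minnP exL) => L /andP[L_gt0 zLb] minL.
exists L; first by apply: minL; rewrite zb.
split.
  split; [exact: stacks_stack_of | split; first exact: stacks_stack_of].
  by exists z; split; [exact: final_stack_of | exists x; rewrite ?mem_stack_of].
exists z, b; rewrite final_stack_of // traverses_fpow.
do 4!split=> //; move=> s s_gt0 ltsL; rewrite traverses_fpow.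
by apply: contraTN ltsL => zsb; rewrite -leqNgt minL // s_gt0.
Qed.

(* r bounds the number of steps from x to the final edge of its stack; each
   non-final edge passed on the way to the next stack costs one such step. *)
Lemma sg_dpath_from_final a s x b r : final_edge a ->
    x \in iter s ftrav [set a] ->
    final fE (stack_of fE x) = Some b -> b \in iter r ftrav [set x] ->
  exists2 w, w <= s + r & sg_dpath fE (stack_of fE a) (stack_of fE x) w.
Proof.
move=> fa; elim: s x b r => [|s IHs] x b r.
  by move=> /set1P -> _ _; exists 0; last exact: sg_nil.
case/ftravP => z az zx xfinal xb.
have [fz|nfz] := boolP (final_edge z).
  have [w le_w p] := IHs z z 0 az (final_stack_of fz) (set11 z).
  have [L le_L [e l]] := sg_edge_from_final fz zx xfinal xb.
  by exists (w + L); [lia | apply: sg_dpath_rcons p e l].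
have zb : b \in iter r.+1 ftrav [set z].
  exact: subsetP (iter_ftrav_step r zx) _ xb.
have [y [c [fzE zy]]] := non_final_step nfz.
move: zx; rewrite fzE /traverses /= orbF => /eqP yx; subst y.
have xz := stack_of_eq (stack_rel_step zy).
rewrite -xz in xfinal; have [w le_w p] := IHs z b r.+1 az xfinal zb.
by exists w; [lia | rewrite -xz].
Qed.

Lemma ftrav_upto_stack_of a d y : final_edge a ->
    y \in ftrav_upto (stack_of fE a) d ->
  y \in stack_of fE a \/ exists2 s, s <= d & y \in iter s ftrav [set a].
Proof.
move=> fa; elim: d y => [|d IHd] y; first by left.
rewrite /= in_setU => /orP[ya|/ftravP[z /IHd[za|[s le_s az]] zy]].
- by left.
- have /(subsetP (ftrav_stack_of fa)) : y \in ftrav (stack_of fE a).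
    by apply/ftravP; exists z.
  by rewrite in_setU => /orP[ya|ay]; [left | right; exists 1].
- by right; exists s.+1 => //; apply/ftravP; exists z.
Qed.

Lemma ball_stacks : irreducible_matrix (transition fE) ->
  forall K, K \in stacks fE ->
    forall K', K' \in stacks fE -> ball fE (#|E| - #|K|) K K'.
Proof.
move=> irr K /stacksP[a fa ->] K' /stacksP[b fb ->].
split; first exact: stacks_stack_of.
have reach y : exists k, y \in iter k ftrav (stack_of fE a).
  have [k ay] := irreducible_ftrav irr a y; exists k.
  by apply: subsetP ay; apply: iter_ftravS; rewrite sub1set mem_stack_of.
have := ftrav_upto_full reach; move/setP/(_ b); rewrite in_setT.
case/(ftrav_upto_stack_of fa) => [ab|[s le_s ab]].
  rewrite inE in ab; rewrite -(final_edge_uniq ab fa fb).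
  by exists 0 => //; apply: sg_nil.
have [w le_w p] :=
  sg_dpath_from_final (r := 0) fa ab (final_stack_of fb) (set11 b).
by exists w => //; lia.
Qed.

End StackGraph.

Theorem lemma4p6 (V E : finType) (src tgt : E -> V) (fV : V -> V)
    (fE : E -> seq (E * bool)) :
  is_graph_map src tgt fV fE ->
  irreducible_map src tgt fE ->
  expanding fE ->
  strongly_connected_SG fE /\
  forall K, K \in stacks fE ->
    forall K', K' \in stacks fE -> ball fE (#|E| - #|K|) K K'.
Proof.
move=> graph_map [irr _] expanding.
have fE_neq_nil e : fE e != [::] by case: (graph_map e); case: (fE e).
have balls := ball_stacks fE_neq_nil expanding irr.
split=> // K K' K_stack K'_stack.
by have [_ [w _ p]] := balls K K_stack K' K'_stack; exists w.
Qed.
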